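(* Let $G=(V,E)$ be a graph with maximum (undirected) degree $\Delta$ and arboricity $\alpha$, let $\mu$ be an orientation of its edges with out-degree at most $2\alpha$, let $h\le\log\alpha$, and consider Procedure Oriented Edge-Coloring$(G,\mu,h)$. For every $0\le i\le h$, the maximum (undirected) degree $\Delta^{(i)}$ of any graph $G^{(i)}$ computed after $i$ levels of recursion satisfies $\Delta^{(i)}\le\frac{\Delta}{2^i}+2$.
   Context: Logarithms are base 2. The arboricity of $G$ is $\max_{S\subseteq V,|S|\ge2}\lceil |E(G[S])|/(|S|-1)\rceil$. An oriented degree-splitting of $(H,\mu)$ with discrepancy $\kappa$ is a partition $(E_1,E_2)$ of $E(H)$ such that for every vertex $v$, the numbers of incoming edges of $v$ in $E_1$ and in $E_2$ differ by at most $\kappa$, and likewise for outgoing edges. Procedure Oriented Edge-Coloring$(H,\mu,h)$: if $h=0$, return a proper $(\Delta(H)+1)$-edge-coloring of $H$ from a base-case subroutine; otherwise compute an oriented degree-splitting $(E_1,E_2)$ of $(H,\mu)$ with discrepancy at most 1, recursively call Oriented Edge-Coloring$(H_1,\mu,h-1)$ and Oriented Edge-Coloring$(H_2,\mu,h-1)$ on $H_1=(V,E_1)$, $H_2=(V,E_2)$ (with the orientation induced by $\mu$), and merge the colorings using disjoint palettes. $G^{(0)}=G$, and a graph computed after $i$ levels of recursion is any $H_1$ or $H_2$ produced from a graph computed after $i-1$ levels. *)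

From HB Require Import structures.
From mathcomp Require Import all_boot all_order all_algebra.
Set Implicit Arguments. Unset Strict Implicit. Unset Printing Implicit Defensive.

Section Defs.
Variable V : finType.

Definition simple_graph (e : rel V) : Prop := symmetric e /\ irreflexive e.

Definition udeg (e : rel V) (v : V) : nat := #|[set u | e v u]|.
Definition max_deg (e : rel V) : nat := \max_(v : V) udeg e v.

(* |E(G[S])| : number of (unordered) edges with both ends in S *)
Definition edges_in (e : rel V) (S : {set V}) : nat :=
  #|[set p : V * V | [&& p.1 \in S, p.2 \in S & e p.1 p.2]]| %/ 2.

Definition ceil_div (a b : nat) : nat := (a + b.-1) %/ b.

Definition arboricity (e : rel V) : nat :=
  \max_(S : {set V} | 1 < #|S|) ceil_div (edges_in e S) (#|S| - 1).

(* mu is an orientation of the edges of e: every edge gets exactly one direction,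
   and only edges get directions. mu u v means the edge {u,v} is oriented u -> v. *)
Definition is_orientation (e mu : rel V) : Prop :=
  (forall u v, mu u v -> e u v) /\ (forall u v, e u v -> mu u v (+) mu v u).

Definition outdeg_mu (mu : rel V) (v : V) : nat := #|[set u | mu v u]|.

(* An oriented (sub)graph is a set of arcs (u, v), meaning edge {u,v} oriented u -> v. *)
Definition arcs_of (mu : rel V) : {set V * V} := [set p | mu p.1 p.2].

Definition indeg (F : {set V * V}) (v : V) : nat := #|[set p in F | p.2 == v]|.
Definition outdeg (F : {set V * V}) (v : V) : nat := #|[set p in F | p.1 == v]|.
Definition deg (F : {set V * V}) (v : V) : nat :=
  #|[set p in F | (p.1 == v) || (p.2 == v)]|.
Definition max_deg_arcs (F : {set V * V}) : nat := \max_(v : V) deg F v.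

Definition close_by (k m n : nat) : bool := (m <= n + k) && (n <= m + k).

Definition oriented_splitting (kappa : nat) (F F1 F2 : {set V * V}) : Prop :=
  [/\ F1 :|: F2 = F, F1 :&: F2 = set0,
      forall v, close_by kappa (indeg F1 v) (indeg F2 v)
    & forall v, close_by kappa (outdeg F1 v) (outdeg F2 v)].

(* computed mu i H : H is a graph computed after i levels of recursion of
   Oriented Edge-Coloring(G, mu, h), for any choice of discrepancy-1 splittings *)
Inductive computed (mu : rel V) : nat -> {set V * V} -> Prop :=
| computed0 : computed mu 0 (arcs_of mu)
| computed_l i F F1 F2 :
    computed mu i F -> oriented_splitting 1 F F1 F2 -> computed mu i.+1 F1
| computed_r i F F1 F2 :
    computed mu i F -> oriented_splitting 1 F F1 F2 -> computed mu i.+1 F2.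

End Defs.

From HB Require Import structures.
From mathcomp Require Import all_boot all_order all_algebra.
From mathcomp Require Import zify.
Import GRing.Theory Num.Theory.

Set Implicit Arguments.
Unset Strict Implicit.
Unset Printing Implicit Defensive.

(* Track the total degree indeg + outdeg of a vertex.  At the root it is at
   most the undirected degree in G; a discrepancy-1 splitting leaves each half
   at most (indeg + 1)/2 incoming and (outdeg + 1)/2 outgoing arcs, so every
   level halves it up to an additive 1, whence 2^i (indeg + outdeg) <= Delta
   + 2 * 2^i at level i.  The undirected degree is at most the total degree. *)

Lemma card_sep_partition (T : finType) (F F1 F2 : {set T}) (P : pred T) :
  F1 :|: F2 = F -> F1 :&: F2 = set0 ->
  #|[set x in F | P x]| = #|[set x in F1 | P x]| + #|[set x in F2 | P x]|.
Proof.
move=> <- F12_0; rewrite !setIdE setIUl cardsU.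
by rewrite setIACA setIid F12_0 set0I cards0 subn0.
Qed.

Lemma close_byC (k m n : nat) : close_by k m n = close_by k n m.
Proof. exact: andbC. Qed.

Lemma close_by1_double (m n : nat) : close_by 1 m n -> 2 * m <= m + n + 1.
Proof. by case/andP; lia. Qed.

Section OrientedDegrees.
Variable V : finType.
Implicit Types (F : {set V * V}) (e mu : rel V) (v : V).

Definition inoutdeg F v := indeg F v + outdeg F v.

Lemma deg_le_inoutdeg F v : deg F v <= inoutdeg F v.
Proof.
rewrite /deg /inoutdeg /indeg /outdeg addnC.
have -> : [set p in F | (p.1 == v) || (p.2 == v)] =
          [set p in F | p.1 == v] :|: [set p in F | p.2 == v].
  by apply/setP => p; rewrite !inE andb_orr.
exact: leq_card_setU.
Qed.

Lemma indeg_arcs_of mu v : indeg (arcs_of mu) v = #|[set u | mu u v]|.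
Proof.
rewrite /indeg -(card_imset _ (f := fun u : V => (u, v))); last by move=> a b [].
apply: eq_card => -[a b]; rewrite !inE /=.
apply/andP/imsetP => [[mu_ab /eqP b_v]|[u]]; first by rewrite -b_v; exists a; rewrite ?inE.
by rewrite inE => mu_uv [-> ->].
Qed.

Lemma outdeg_arcs_of mu v : outdeg (arcs_of mu) v = #|[set u | mu v u]|.
Proof.
rewrite /outdeg -(card_imset _ (f := fun u : V => (v, u))); last by move=> a b [].
apply: eq_card => -[a b]; rewrite !inE /=.
apply/andP/imsetP => [[mu_ab /eqP a_v]|[u]]; first by rewrite -a_v; exists b; rewrite ?inE.
by rewrite inE => mu_vu [-> ->].
Qed.

Lemma inoutdeg_arcs_of e mu v :
  symmetric e -> is_orientation e mu -> inoutdeg (arcs_of mu) v <= udeg e v.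
Proof.
move=> e_sym [mu_e mu_xor].
rewrite /inoutdeg indeg_arcs_of outdeg_arcs_of -cardsUI.
have -> : [set u | mu u v] :&: [set u | mu v u] = set0.
  apply/setP => u; rewrite !inE; apply/negbTE/negP => /andP[mu_uv mu_vu].
  by have := mu_xor u v (mu_e _ _ mu_uv); rewrite mu_uv mu_vu.
rewrite cards0 addn0; apply: subset_leq_card; apply/subsetP => u.
by rewrite !inE => /orP[/mu_e|/mu_e]; rewrite // e_sym.
Qed.

Lemma oriented_splittingC k F F1 F2 :
  oriented_splitting k F F1 F2 -> oriented_splitting k F F2 F1.
Proof.
case=> F_U F_I close_in close_out; split; rewrite 1?setUC 1?setIC //.
- by move=> v; rewrite close_byC.
- by move=> v; rewrite close_byC.
Qed.

Lemma inoutdeg_splitl F F1 F2 v :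
  oriented_splitting 1 F F1 F2 -> 2 * inoutdeg F1 v <= inoutdeg F v + 2.
Proof.
case=> F_U F_I close_in close_out.
have := close_by1_double (close_in v); have := close_by1_double (close_out v).
rewrite /inoutdeg /indeg /outdeg.
by rewrite !(card_sep_partition _ F_U F_I); lia.
Qed.

Lemma computed_inoutdeg e mu i H v :
  symmetric e -> is_orientation e mu -> computed mu i H ->
  2 ^ i * inoutdeg H v <= max_deg e + 2 * 2 ^ i.
Proof.
move=> e_sym mu_e; elim: i H / => [|i F F1 F2 _ IH split_F|i F F1 F2 _ IH split_F].
- rewrite expn0 mul1n; apply: leq_trans (inoutdeg_arcs_of v e_sym mu_e) _.
  exact: leq_trans (leq_bigmax (F := udeg e) v) (leq_addr _ _).
- by have := inoutdeg_splitl v split_F; rewrite expnS; nia.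
- by have := inoutdeg_splitl v (oriented_splittingC split_F); rewrite expnS; nia.
Qed.

Lemma computed_max_deg e mu i H :
  symmetric e -> is_orientation e mu -> computed mu i H ->
  2 ^ i * max_deg_arcs H <= max_deg e + 2 * 2 ^ i.
Proof.
move=> e_sym mu_e H_i; rewrite mulnC -leq_divRL ?expn_gt0 //.
apply/bigmax_leqP => v _; rewrite leq_divRL ?expn_gt0 // mulnC.
apply: leq_trans (computed_inoutdeg v e_sym mu_e H_i).
by rewrite leq_mul2l deg_le_inoutdeg orbT.
Qed.

End OrientedDegrees.

Local Open Scope ring_scope.

Theorem corollary4p9 (V : finType) (e mu : rel V) (Delta alpha h : nat) :
  simple_graph e ->
  Delta = max_deg e ->
  alpha = arboricity e ->
  is_orientation e mu ->
  (forall v, (outdeg_mu mu v <= 2 * alpha)%N) ->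
  (2 ^ h <= alpha)%N ->
  forall (i : nat) (H : {set V * V}), (i <= h)%N -> computed mu i H ->
    (max_deg_arcs H)%:R <= (Delta%:R / (2 ^ i)%:R : rat) + 2.
Proof.
move=> [e_sym _] -> _ mu_e _ _ i H _ H_i.
have pow_gt0 : 0 < (2 ^ i)%:R :> rat by rewrite ltr0n expn_gt0.
rewrite -(ler_pM2r pow_gt0) mulrDl divfK ?lt0r_neq0 //.
rewrite -!natrM -natrD ler_nat mulnC.
exact: computed_max_deg e_sym mu_e H_i.
Qed.
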